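(* Let $\mathcal{A}$ and $\mathcal{B}$ be dual Banach algebras and let $\theta:\mathcal{A}\to\mathcal{B}$ be a continuous surjective algebra homomorphism which is also weak$^*$-weak$^*$ continuous. If $\mathcal{A}$ is Johnson pseudo-Connes amenable, then $\mathcal{B}$ is Johnson pseudo-Connes amenable.
   Context: A dual Banach algebra is a Banach algebra $\mathcal{A}$ together with a closed $\mathcal{A}$-submodule $\mathcal{A}_*$ of $\mathcal{A}^*$ such that $\mathcal{A}=(\mathcal{A}_* )^*$; weak$^*$ topologies refer to these preduals. For a bimodule $E$, $\sigma wc(E)$ is the set of $x\in E$ for which $a\mapsto a\cdot x$, $a\mapsto x\cdot a$ are weak$^*$-weak continuous. $\mathcal{A}\hat{\otimes}\mathcal{A}$ has actions $a\cdot(b\otimes c)=ab\otimes c$, $(b\otimes c)\cdot a=b\otimes ca$; duals carry the dual actions. $\pi_{\mathcal{A}}$ is the multiplication map $\mathcal{A}\hat{\otimes}\mathcal{A}\to\mathcal{A}$, $i_{\mathcal{A}_*}:\mathcal{A}_*\hookrightarrow\mathcal{A}^*$ the canonical embedding. $\mathcal{A}$ is Johnson pseudo-Connes amenable if there is a (not necessarily bounded) net $(m_\alpha)$ in $(\mathcal{A}\hat{\otimes}\mathcal{A})^{**}$ with $\langle T,a\cdot m_\alpha\rangle=\langle T,m_\alpha\cdot a\rangle$ for all $a\in\mathcal{A}$, $T\in\sigma wc((\mathcal{A}\hat{\otimes}\mathcal{A})^* )$, $\alpha$, and $i_{\mathcal{A}_*}^*\pi_{\mathcal{A}}^{**}(m_\alpha)a\to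 a$ for every $a\in\mathcal{A}$ (and analogously for $\mathcal{B}$). *)

From HB Require Import structures.
From mathcomp Require Import all_boot all_order all_algebra.
From mathcomp Require Import all_classical all_reals all_analysis.
Set Implicit Arguments. Unset Strict Implicit. Unset Printing Implicit Defensive.
Import Order.TTheory GRing.Theory Num.Theory.
Import numFieldNormedType.Exports.
Local Open Scope classical_set_scope.
Local Open Scope ring_scope.

Definition lin {K : numFieldType} {V W : lmodType K} (f : V -> W) : Prop :=
  forall (k : K) (x y : V), f (k *: x + y) = k *: f x + f y.

Definition fbound {K : numFieldType} {A : normedModType K} (phi : A -> K) (D : K) : Prop :=
  forall b : A, `|phi b| <= D * `|b|.

Definition bfun {K : numFieldType} {A : normedModType K} (phi : A -> K) : Prop :=
  lin (phi : A -> K^o) /\ exists C : K, fbound phi C.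

Definition banach_algebra {K : numFieldType} {A : completeNormedModType K}
    (mul : A -> A -> A) : Prop :=
  (forall a, lin (mul a)) /\ (forall b, lin (fun a => mul a b)) /\
  (forall a b c, mul a (mul b c) = mul (mul a b) c) /\
  (forall a b, `|mul a b| <= `|a| * `|b|).

(* (A, mul) with predual Astar \subset A^* is a dual Banach algebra:
   Astar is a norm-closed A-submodule of A^*, and the canonical map
   A -> (Astar)^*, a |-> (phi |-> phi a), is an isometric isomorphism. *)
Definition dual_banach_algebra {K : numFieldType} {A : completeNormedModType K}
    (mul : A -> A -> A) (Astar : set (A -> K)) : Prop :=
  banach_algebra mul /\
  (forall phi, Astar phi -> bfun phi) /\
  Astar (fun _ => 0) /\
  (forall (k : K) phi psi, Astar phi -> Astar psi -> Astar (fun b => k * phi b + psi b)) /\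
  (forall (a : A) phi, Astar phi ->
     Astar (fun b => phi (mul b a)) /\ Astar (fun b => phi (mul a b))) /\
  (forall phi, bfun phi ->
     (forall e : K, 0 < e -> exists psi, Astar psi /\ fbound (fun b => phi b - psi b) e) ->
     Astar phi) /\
  (forall (a : A) (r : K), r < `|a| ->
     exists phi, Astar phi /\ fbound phi 1 /\ r < `|phi a|) /\
  (forall F : (A -> K) -> K,
     (forall (k : K) phi psi, Astar phi -> Astar psi ->
        F (fun b => k * phi b + psi b) = k * F phi + F psi) ->
     (exists C : K, forall phi (D : K), Astar phi -> 0 <= D -> fbound phi D ->
        `|F phi| <= C * D) ->
     exists a : A, forall phi, Astar phi -> F phi = phi a).

(* Continuity of f : X -> Y, where X carries the initial (weak) topology
   induced by the family F of scalar functions and Y the one induced by G. *)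
Definition wcont {K : numFieldType} {X Y : Type} (F : set (X -> K)) (G : set (Y -> K))
    (f : X -> Y) : Prop :=
  forall (x0 : X) (n : nat) (psi : 'I_n -> Y -> K) (eps : K),
    (forall j, G (psi j)) -> 0 < eps ->
    exists (m : nat) (phi : 'I_m -> X -> K) (delta : K),
      (forall i, F (phi i)) /\ 0 < delta /\
      forall x, (forall i, `|phi i x - phi i x0| < delta) ->
        forall j, `|psi j (f x) - psi j (f x0)| < eps.

(* (A \hat\otimes A)^* is identified with bounded bilinear forms on A x A *)
Definition bbound {K : numFieldType} {A : normedModType K} (T : A -> A -> K) (D : K) : Prop :=
  forall a c : A, `|T a c| <= D * (`|a| * `|c|).

Definition bbil {K : numFieldType} {A : normedModType K} (T : A -> A -> K) : Prop :=
  (forall a, lin (T a : A -> K^o)) /\ (forall c, lin ((fun a => T a c) : A -> K^o)) /\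
  exists C : K, bbound T C.

(* elements of (A \hat\otimes A)^** : bounded linear functionals on bbil *)
Definition bidual {K : numFieldType} {A : normedModType K} (m : (A -> A -> K) -> K) : Prop :=
  (forall (k : K) T S, bbil T -> bbil S ->
     m (fun a c => k * T a c + S a c) = k * m T + m S) /\
  exists C : K, forall T (D : K), bbil T -> 0 <= D -> bbound T D -> `|m T| <= C * D.

(* dual module actions on (A \hat\otimes A)^*:
   <a.T, b(x)c> = <T, b(x)ca>,  <T.a, b(x)c> = <T, ab(x)c> *)
Definition lact {K : numFieldType} {A : normedModType K} (mul : A -> A -> A)
    (a : A) (T : A -> A -> K) : A -> A -> K := fun b c => T b (mul c a).
Definition ract {K : numFieldType} {A : normedModType K} (mul : A -> A -> A)
    (T : A -> A -> K) (a : A) : A -> A -> K := fun b c => T (mul a b) c.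

(* sigma wc((A \hat\otimes A)^* ): weak*-weak continuity of a |-> a.T and a |-> T.a,
   the weak topology on (A \hat\otimes A)^* being induced by (A \hat\otimes A)^** *)
Definition swc {K : numFieldType} {A : normedModType K} (mul : A -> A -> A)
    (Astar : set (A -> K)) (T : A -> A -> K) : Prop :=
  bbil T /\
  wcont Astar (@bidual K A) (fun a => lact mul a T) /\
  wcont Astar (@bidual K A) (fun a => ract mul T a).

(* For m in (A\hat\otimes A)^**,
   a.m = m.a on sigma wc means m (T.a) = m (a.T); the element
   i^* _{A_* } pi^**(m) of (A_* )^* = A is the e in A with
   phi e = m (phi o pi) for every phi in A_*. *)
Definition johnson_pseudo_connes_amenable {K : numFieldType} {A : completeNormedModType K}
    (mul : A -> A -> A) (Astar : set (A -> K)) : Prop :=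
  exists (I : Type) (le : I -> I -> Prop),
    (exists i : I, True) /\ (forall i, le i i) /\
    (forall i j k, le i j -> le j k -> le i k) /\
    (forall i j, exists k, le i k /\ le j k) /\
    exists (m : I -> (A -> A -> K) -> K) (e : I -> A),
      (forall i, bidual (m i)) /\
      (forall i (a : A) T, swc mul Astar T -> m i (ract mul T a) = m i (lact mul a T)) /\
      (forall i phi, Astar phi -> phi (e i) = m i (fun b c => phi (mul b c))) /\
      (forall (a : A) (eps : K), 0 < eps ->
         exists i0, forall i, le i0 i -> `|mul (e i) a - a| < eps).

From HB Require Import structures.
From mathcomp Require Import all_boot all_order all_algebra.
From mathcomp Require Import all_classical all_reals all_analysis.
From mathcomp Require Import ring.
Import Order.TTheory GRing.Theory Num.Theory.
Import numFieldNormedType.Exports.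
Local Open Scope classical_set_scope.
Local Open Scope ring_scope.
Set Implicit Arguments.
Unset Strict Implicit.

(* Transport the approximate diagonal along theta: m_i becomes the functional
   T |-> m_i (T o (theta x theta)) and e_i becomes theta (e_i).  The only
   non-formal point is that phi o theta lies in A_* for phi in B_*: weak*
   continuity of theta at 0 yields psi_1, ..., psi_n in A_* controlling
   phi o theta near 0, so phi o theta vanishes on the common kernel of the
   psi_j and is therefore a linear combination of them. *)

Section LinearFacts.
Variables (K : numFieldType) (V W : lmodType K) (f : V -> W).
Hypothesis hf : lin f.

Let fL : {linear V -> W} := HB.pack f (GRing.isLinear.Build K V W *:%R f hf).

Lemma lin0 : f 0 = 0. Proof. exact: (linear0 fL). Qed.
Lemma linZ k x : f (k *: x) = k *: f x. Proof. exact: (linearZ_LR fL k x). Qed.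
Lemma linB x y : f (x - y) = f x - f y. Proof. exact: (linearB fL x y). Qed.

End LinearFacts.

Lemma lin_comp (K : numFieldType) (U V W : lmodType K) (f : U -> V) (g : V -> W) :
  lin f -> lin g -> lin (g \o f).
Proof. by move=> hf hg k x y /=; rewrite hf hg. Qed.

Lemma lin_bounded (K : numFieldType) (V W : normedModType K) (f : V -> W) :
  lin f -> continuous f -> exists2 M, 0 < M & forall x, `|f x| <= M * `|x|.
Proof.
move=> hf fc.
pose fL : {linear V -> W} := HB.pack f (GRing.isLinear.Build K V W *:%R f hf).
have /linear_boundedP/pinfty_ex_gt0[M M0 fM] :=
  continuous_linear_bounded 0 (fc 0 : {for 0, continuous fL}).
by exists M.
Qed.

Section CommonKernel.
Variables (K : numFieldType) (V : lmodType K).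

Lemma common_kernel_project n (f : 'I_n.+1 -> V -> K) x0 x :
  (forall i, lin (f i : V -> K^o)) ->
  (forall i, f (lift ord0 i) x0 = 0) -> f ord0 x0 != 0 ->
  (forall i, f (lift ord0 i) x = 0) ->
  forall i, f i (x - (f ord0 x / f ord0 x0) *: x0) = 0.
Proof.
move=> lf fx0 nx0 fx i; rewrite (linB (lf i)) (linZ (lf i)) /GRing.scale /=.
case: (unliftP ord0 i) => [j ->|->]; first by rewrite fx fx0 mulr0 subr0.
by rewrite divfK // subrr.
Qed.

Lemma common_kernel_vanish n (f : 'I_n -> V -> K) (g : V -> K) d :
  (forall i, lin (f i : V -> K^o)) -> lin (g : V -> K^o) -> 0 < d ->
  (forall x, (forall i, `|f i x| < d) -> `|g x| < 1) ->
  forall x, (forall i, f i x = 0) -> g x = 0.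
Proof.
move=> lf lg d0 small x fx; have [//|gx] := eqVneq (g x) 0.
have : `|g ((g x)^-1 *: x)| < 1.
  by apply: small => i; rewrite (linZ (lf i)) fx /GRing.scale /= mulr0 normr0.
by rewrite (linZ lg) /GRing.scale /= mulVf // normr1 ltxx.
Qed.

Variable S : set (V -> K).
Hypotheses (S0 : S (fun _ => 0))
  (SD : forall k phi psi, S phi -> S psi -> S (fun b => k * phi b + psi b)).

Lemma common_kernel_mem n (f : 'I_n -> V -> K) (g : V -> K) :
  (forall i, S (f i)) -> (forall i, lin (f i : V -> K^o)) -> lin (g : V -> K^o) ->
  (forall x, (forall i, f i x = 0) -> g x = 0) -> S g.
Proof.
elim: n f g => [|n IH] f g Sf lf lg fg.
  by have -> : g = (fun _ => 0) by apply: funext => x; apply: fg => -[].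
pose h := f ord0; pose f' i := f (lift ord0 i).
have IH' := IH f' _ (fun i => Sf _) (fun i => lf _).
case: (pselect (exists x0, (forall i, f' i x0 = 0) /\ h x0 != 0)); last first.
  move=> noh; apply: IH' => // x f'x; apply: fg => i.
  case: (unliftP ord0 i) => [j ->|->]; first exact: f'x.
  by apply: contra_notP noh => /eqP hx; exists x.
case=> x0 [f'x0 hx0]; pose c := g x0 / h x0.
have Sg' : S (fun x => g x - c * h x).
  apply: IH' => [k x y|x f'x]; first by rewrite lg /h (lf ord0) /GRing.scale /=; ring.
  have := fg _ (common_kernel_project lf f'x0 hx0 f'x).
  rewrite (linB lg) (linZ lg) /GRing.scale /= => /eqP; rewrite subr_eq0 => /eqP ->.
  by rewrite /c /h; ring.
have -> : g = (fun x => c * h x + (g x - c * h x)) by apply: funext => x; ring.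
exact: SD (Sf _) Sg'.
Qed.

End CommonKernel.

Section WeakContinuity.
Variables (K : numFieldType) (X Y Z : Type).
Variables (F : set (X -> K)) (G : set (Y -> K)) (H : set (Z -> K)).

Lemma wcont_comp (f : X -> Y) (g : Y -> Z) :
  wcont F G f -> wcont G H g -> wcont F H (g \o f).
Proof.
move=> hf hg x0 n psi eps Hpsi eps0.
have [m [phi [delta [Gphi [delta0 hgx]]]]] := hg (f x0) n psi eps Hpsi eps0.
have [m' [phi' [delta' [Fphi' [delta'0 hfx]]]]] := hf x0 m phi delta Gphi delta0.
by exists m', phi', delta'; do 2 split=> //; move=> x /hfx /hgx.
Qed.

Lemma wcont_pullback (f : X -> Y) :
  (forall psi, G psi -> F (psi \o f)) -> wcont F G f.
Proof.
move=> Ff x0 n psi eps Gpsi eps0; exists n, (fun j => psi j \o f), eps.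
by split; [move=> j; exact: Ff | split].
Qed.

End WeakContinuity.

Lemma wcont_pullback_mem (K : numFieldType) (A B : lmodType K)
    (Astar : set (A -> K)) (Bstar : set (B -> K)) (th : A -> B) (phi : B -> K) :
  Astar (fun _ => 0) ->
  (forall k phi psi, Astar phi -> Astar psi -> Astar (fun b => k * phi b + psi b)) ->
  (forall psi, Astar psi -> lin (psi : A -> K^o)) ->
  lin th -> wcont Astar Bstar th -> Bstar phi -> lin (phi : B -> K^o) ->
  Astar (phi \o th).
Proof.
move=> S0 SD Slin hl hw Bphi lphi.
have [m [f [d [Sf [d0 near0]]]]] := hw 0 1 (fun _ => phi) 1 (fun _ => Bphi) ltr01.
have lf i := Slin _ (Sf i).
have lphith := lin_comp hl lphi.
apply: (common_kernel_mem S0 SD Sf lf lphith).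
apply: (common_kernel_vanish lf lphith d0) => x fx.
have := near0 x _ ord0; rewrite /= (lin0 hl) (lin0 lphi) subr0; apply=> i.
by rewrite (lin0 (lf i)) subr0.
Qed.

Definition bil_pullback {K : numFieldType} {A B : Type} (th : A -> B)
    (T : B -> B -> K) : A -> A -> K :=
  fun a c => T (th a) (th c).

Section BilinearPullback.
Variables (K : numFieldType) (A B : normedModType K) (th : A -> B) (M : K).
Hypotheses (hl : lin th) (M0 : 0 <= M) (hM : forall a, `|th a| <= M * `|a|).

Lemma bbound_pullback T C : bbound T C -> bbound (bil_pullback th T) (`|C| * (M * M)).
Proof.
move=> hC a c; apply: le_trans (hC _ _) _.
have Cx0 : 0 <= C * (`|th a| * `|th c|) := le_trans (normr_ge0 _) (hC _ _).
rewrite -(ger0_norm Cx0) !normrM !normr_id -mulrA ler_wpM2l //.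
by rewrite mulrACA ler_pM.
Qed.

Lemma bbil_pullback T : bbil T -> bbil (bil_pullback th T).
Proof.
case=> [l1 [l2 [C hC]]]; split; [|split].
- by move=> a; exact: (lin_comp hl (l1 (th a))).
- by move=> c; exact: (lin_comp hl (l2 (th c))).
- by exists (`|C| * (M * M)); exact: bbound_pullback.
Qed.

Lemma bidual_pullback m : bidual m -> bidual (m \o bil_pullback th).
Proof.
case=> [lm [C hC]]; split=> [k T S bT bS|].
  exact: (lm k _ _ (bbil_pullback bT) (bbil_pullback bS)).
exists (C * (M * M)) => T D bT D0 bD /=.
rewrite -mulrA [_ * D]mulrC -(ger0_norm D0).
apply: hC; [exact: bbil_pullback | by rewrite !mulr_ge0 | exact: bbound_pullback].
Qed.

Variables (mulA : A -> A -> A) (mulB : B -> B -> B).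
Hypothesis hmul : forall a b, th (mulA a b) = mulB (th a) (th b).

Lemma pullback_lact a T :
  bil_pullback th (lact mulB (th a) T) = lact mulA a (bil_pullback th T).
Proof. by apply: funext => x; apply: funext => y; rewrite /bil_pullback /lact hmul. Qed.

Lemma pullback_ract a T :
  bil_pullback th (ract mulB T (th a)) = ract mulA (bil_pullback th T) a.
Proof. by apply: funext => x; apply: funext => y; rewrite /bil_pullback /ract hmul. Qed.

Variables (Astar : set (A -> K)) (Bstar : set (B -> K)).
Hypothesis hw : wcont Astar Bstar th.

Lemma swc_pullback T : swc mulB Bstar T -> swc mulA Astar (bil_pullback th T).
Proof.
case=> bT [wl wr]; split; first exact: bbil_pullback.
have wP : wcont (@bidual K B) (@bidual K A) (bil_pullback th).
  by apply: wcont_pullback => m; exact: bidual_pullback.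
split.
- have -> : (fun a => lact mulA a (bil_pullback th T)) =
            bil_pullback th \o (fun b => lact mulB b T) \o th.
    by apply: funext => a; rewrite /= pullback_lact.
  exact: wcont_comp (wcont_comp hw wl) wP.
- have -> : (fun a => ract mulA (bil_pullback th T) a) =
            bil_pullback th \o (fun b => ract mulB T b) \o th.
    by apply: funext => a; rewrite /= pullback_ract.
  exact: wcont_comp (wcont_comp hw wr) wP.
Qed.

End BilinearPullback.

Unset Implicit Arguments.

Theorem proposition2p8 (K : numFieldType) (A B : completeNormedModType K)
    (mulA : A -> A -> A) (mulB : B -> B -> B)
    (Astar : set (A -> K)) (Bstar : set (B -> K)) (theta : A -> B) :
  dual_banach_algebra mulA Astar ->
  dual_banach_algebra mulB Bstar ->
  lin theta ->
  (forall a b : A, theta (mulA a b) = mulB (theta a) (theta b)) ->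
  continuous theta ->
  (forall b : B, exists a : A, theta a = b) ->
  wcont Astar Bstar theta ->
  johnson_pseudo_connes_amenable mulA Astar ->
  johnson_pseudo_connes_amenable mulB Bstar.
Proof.
move=> [_ [SbA [S0A [SDA _]]]] [_ [SbB _]] hl hmul hc hsurj hw.
case=> I [le [ne [refl [trans [dir [m [e [bm [hm [he conv]]]]]]]]]].
have [M M0 hM] := lin_bounded hl hc.
exists I, le; do 4 (split=> //).
exists (fun i => m i \o bil_pullback theta), (fun i => theta (e i)).
split; [|split; [|split]].
- by move=> i; exact: (bidual_pullback hl (ltW M0) hM (bm i)).
- move=> i b T sT; have [a <-] := hsurj b.
  rewrite /= (pullback_ract hmul) (pullback_lact hmul); apply: hm.
  exact: (swc_pullback hl (ltW M0) hM hmul hw sT).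
- move=> i phi Bphi.
  have Aphith : Astar (phi \o theta).
    by apply: wcont_pullback_mem S0A SDA _ hl hw Bphi (SbB _ Bphi).1 => psi /SbA[].
  rewrite [LHS](he i _ Aphith) /=; congr (m i _).
  by apply: funext => a; apply: funext => c; rewrite /bil_pullback hmul.
- move=> b eps eps0; have [a <-] := hsurj b.
  have [i0 hi0] := conv a (eps / M) (divr_gt0 eps0 M0).
  exists i0 => i /hi0 small; rewrite -hmul -(linB hl).
  by apply: le_lt_trans (hM _) _; rewrite -ltr_pdivlMl // mulrC.
Qed.
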